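(* Let $\Sigma$ be an alphabet and $n\geq 1$. A function $g\colon\mathcal{T}(\Sigma)^n\to\mathcal{T}(\Sigma)$ is WCP if and only if it satisfies the following condition (GCP): for all $a_1,\ldots,a_n\in\Sigma$, all $i\in\{1,\ldots,n\}$ and all $b_i\in\Sigma$, $$\sigma_{a_i}^{b_i}(g(a_1,\ldots,a_n))=\sigma_{a_i}^{b_i}(g(a_1,\ldots,a_{i-1},b_i,a_{i+1},\ldots,a_n)).$$
   Context: Let $\Sigma$ be an alphabet not containing $0,1$. A binary tree over $\Sigma$ is a finite set $t \subseteq \{0,1\}^*\Sigma$ such that for any $ua, vb \in t$ with $ua \neq vb$, $u$ is not a prefix of $v$ and $v$ is not a prefix of $u$; $\mathcal{T}(\Sigma)$ is the set of such trees, $\mathbf 0=\emptyset$, each letter $a$ is identified with $\{a\}$, and $t\star t' = 0.t\cup 1.t'$. Every map $h\colon\Sigma\to\mathcal{T}(\Sigma)$ extends uniquely to an endomorphism of $\langle\mathcal{T}(\Sigma),\star\rangle$, still denoted $h$. For $a\in\Sigma$ and $\tau\in\mathcal{T}(\Sigma)$, the grafting $\sigma_a^\tau$ is the endomorphism with $\sigma_a^\tau(a)=\tau$ and $\sigma_a^\tau(b)=b$ for $b\neq a$. A function $g\colon\mathcal{T}(\Sigma)^n\to\mathcal{T}(\Sigma)$ is WCP if for every idempotent mapping $h\colon\Sigma\to\Sigma$ and all $\vec u,\vec v\in\Sigma^n$, $h(\vec u)=h(\vec v)$ implies $h(g(\vec u))=h(g(\vec v))$, where $h(\langle u_1,\ldots,u_n\rangle)=\langle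 h(u_1),\ldots,h(u_n)\rangle$. *)

From HB Require Import structures.
From mathcomp Require Import all_boot.
From mathcomp Require Import finmap.
Set Implicit Arguments. Unset Strict Implicit. Unset Printing Implicit Defensive.
Local Open Scope fset_scope.

Section BinTrees.
Variable Sigma : finType.

(* A word of {0,1}^* Sigma : a bit-string (false = 0, true = 1) followed by a letter. *)
Definition word := (seq bool * Sigma)%type.

Definition is_tree (t : {fset word}) : bool :=
  all (fun x : word => all (fun y : word =>
        (x == y) || (~~ prefix x.1 y.1 && ~~ prefix y.1 x.1)) t) t.

Definition tree := {t : {fset word} | is_tree t}.

Definition prefix_tree (u : seq bool) (t : {fset word}) : {fset word} :=
  [fset ((u ++ w.1), w.2) | w in t].

(* The endomorphism of <T(Sigma), *> extending f : Sigma -> T(Sigma),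
   written out explicitly: f(t) = \bigcup_{ua in t} u.f(a). *)
Definition subst (f : Sigma -> {fset word}) (t : {fset word}) : {fset word} :=
  \bigcup_(x <- t) prefix_tree x.1 (f x.2).

Definition letter_set (a : Sigma) : {fset word} := [fset (([::] : seq bool), a)].

Lemma letter_is_tree (a : Sigma) : is_tree (letter_set a).
Proof.
by rewrite /is_tree /letter_set; apply/allP => x /fset1P ->; apply/allP => y /fset1P ->; rewrite eqxx.
Qed.

Definition letter (a : Sigma) : tree := exist _ (letter_set a) (letter_is_tree a).

Definition lmap (h : Sigma -> Sigma) (t : {fset word}) : {fset word} :=
  subst (fun c => letter_set (h c)) t.

Definition graft (a : Sigma) (tau : {fset word}) (t : {fset word}) : {fset word} :=
  subst (fun c => if c == a then tau else letter_set c) t.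

Definition WCP (n : nat) (g : ('I_n -> tree) -> tree) : Prop :=
  forall h : Sigma -> Sigma, (forall x, h (h x) = h x) ->
  forall u v : 'I_n -> Sigma, (forall i, h (u i) = h (v i)) ->
    lmap h (val (g (fun i => letter (u i)))) = lmap h (val (g (fun i => letter (v i)))).

Definition GCP (n : nat) (g : ('I_n -> tree) -> tree) : Prop :=
  forall (a : 'I_n -> Sigma) (i : 'I_n) (b : Sigma),
    graft (a i) (letter_set b) (val (g (fun j => letter (a j)))) =
    graft (a i) (letter_set b)
      (val (g (fun j => letter (if j == i then b else a j)))).

End BinTrees.

From mathcomp Require Import all_boot.
From mathcomp Require Import finmap.
From Stdlib Require Import FunctionalExtensionality.

(* A letter-to-letter map acts on a tree by relabelling its leaves, and a
   grafting [sigma_a^b] with [b] a letter is the relabelling [a |-> b]; this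
   relabelling is idempotent, so WCP applied to it is exactly GCP.
   Conversely, if [h u = h v], pass from [u] to [v] one coordinate at a time:
   each step replaces [u i] by a letter [b] with [h b = h (u i)], and since
   [h] absorbs the relabelling [u i |-> b], applying [h] to both sides of
   the GCP identity shows that the step does not change [h (g _)]. *)

Set Implicit Arguments. Unset Strict Implicit. Unset Printing Implicit Defensive.
Local Open Scope fset_scope.

Section Relabelling.
Variable Sigma : finType.

Definition relabel (a b c : Sigma) : Sigma := if c == a then b else c.

Lemma relabel_idem (a b c : Sigma) : relabel a b (relabel a b c) = relabel a b c.
Proof. by rewrite /relabel; case: (c =P a) => [_|/eqP/negbTE ->] //; case: ifP => // /eqP. Qed.

Lemma subst_letterE (f : Sigma -> {fset word Sigma}) (h : Sigma -> Sigma) t :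
  (forall c, f c = letter_set (h c)) -> subst f t = [fset (x.1, h x.2) | x in t].
Proof.
move=> fE; rewrite /subst (eq_bigr (fun x => [fset (x.1, h x.2)])).
  by rewrite bigfcup_imfset1.
move=> x _; rewrite fE /prefix_tree /letter_set.
apply/fsetP => y; apply/imfsetP/fset1P => [[w /fset1P -> ->]|->] /=.
  by rewrite cats0.
by exists ([::], h x.2); rewrite ?inE //= cats0.
Qed.

Lemma lmapE (h : Sigma -> Sigma) t : lmap h t = [fset (x.1, h x.2) | x in t].
Proof. exact: subst_letterE. Qed.

Lemma graft_letterE (a b : Sigma) t : graft a (letter_set b) t = lmap (relabel a b) t.
Proof. by rewrite lmapE; apply: subst_letterE => c; rewrite /relabel; case: ifP. Qed.

Lemma lmap_comp (h s : Sigma -> Sigma) t : lmap h (lmap s t) = lmap (h \o s) t.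
Proof.
rewrite !lmapE; apply/fsetP => y; apply/imfsetP/imfsetP => [[w /imfsetP [z zt ->] ->]|].
  by exists z.
by case=> z zt ->; exists (z.1, s z.2) => //; apply/imfsetP; exists z.
Qed.

Lemma eq_lmap (h h' : Sigma -> Sigma) t : h =1 h' -> lmap h t = lmap h' t.
Proof.
by move=> hE; rewrite !lmapE; apply/fsetP => y; apply/imfsetP/imfsetP;
  case=> z zt ->; exists z; rewrite ?hE.
Qed.

End Relabelling.

Section Characterisation.
Variables (Sigma : finType) (n : nat) (g : ('I_n -> tree Sigma) -> tree Sigma).

Definition eval_letters (u : 'I_n -> Sigma) : {fset word Sigma} :=
  val (g (fun i => letter (u i))).

Lemma eq_eval_letters (u v : 'I_n -> Sigma) :
  u =1 v -> eval_letters u = eval_letters v.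
Proof. by move=> /functional_extensionality ->. Qed.

Lemma WCP_GCP : WCP g -> GCP g.
Proof.
move=> W a i b; rewrite !graft_letterE.
apply: W => [c|j]; first exact: relabel_idem.
rewrite /relabel; case: (j =P i) => [->|_]; last by [].
by rewrite eqxx; case: ifP => // /eqP ->.
Qed.

Hypothesis gcp : GCP g.

Lemma GCP_lmap_update (h : Sigma -> Sigma) (a : 'I_n -> Sigma) (i : 'I_n) (b : Sigma) :
  h b = h (a i) ->
  lmap h (eval_letters a) = lmap h (eval_letters (fun j => if j == i then b else a j)).
Proof.
move=> hb; have := congr1 (lmap h) (gcp a i b).
rewrite !graft_letterE !lmap_comp.
have absorb : h \o relabel (a i) b =1 h by move=> c; rewrite /= /relabel; case: eqP => [->|].
by rewrite !(eq_lmap _ absorb).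
Qed.

Lemma GCP_lmap_congr (h : Sigma -> Sigma) (u v : 'I_n -> Sigma) :
  (forall i, h (u i) = h (v i)) -> lmap h (eval_letters u) = lmap h (eval_letters v).
Proof.
move=> huv; pose mix k (j : 'I_n) := if j < k then v j else u j.
have mixP k : k <= n -> lmap h (eval_letters u) = lmap h (eval_letters (mix k)).
  elim: k => [_|k IH lt_kn].
    by congr lmap; apply: eq_eval_letters => j; rewrite /mix.
  rewrite IH 1?ltnW // (GCP_lmap_update (i := Ordinal lt_kn) (b := v (Ordinal lt_kn))).
    congr lmap; apply: eq_eval_letters => j; rewrite /mix.
    case: eqP => [->|ne]; first by rewrite /= ltnSn.
    rewrite ltnS (leq_eqVlt j k); case: eqP => // jk.
    by case: ne; apply: val_inj.
  by rewrite /mix /= ltnn huv.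
rewrite (mixP n) //; congr lmap; apply: eq_eval_letters => j.
by rewrite /mix ltn_ord.
Qed.

End Characterisation.

Theorem mainTheorem7 (Sigma : finType) (n : nat) (hn : 1 <= n)
  (g : ('I_n -> tree Sigma) -> tree Sigma) :
  WCP g <-> GCP g.
Proof.
split; first exact: WCP_GCP.
by move=> gcp h _; exact: GCP_lmap_congr.
Qed.
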